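(* Let $G$ be a split connected reductive group with maximal torus $T$, $M\subseteq G$ a Levi subgroup containing $T$, $\tilde W_M=X^*(T)\rtimes W_M$, and $W^M=\{w\in W:\ell(s_\alpha w)>\ell(w)\ \forall\alpha\in\Delta_M\}$. Let $\tilde z\in\tilde W_M$ and let $r\in\tilde W_M$ be an affine reflection with $\ell(\tilde z)<\ell(r\tilde z)$ (lengths in $\tilde W_M$). Then for every $w^M\in W^M$, $\ell((w^M)^{-1}\tilde zw^M)<\ell((w^M)^{-1}r\tilde zw^M)$ (lengths in $\tilde W$).
   Context: $W=W(G,T)$, $W_M=W(M,T)\subseteq W$, $\Delta_M$ the simple roots of $(M,B\cap M,T)$, $\tilde W=X^*(T)\rtimes W$. Length functions on $\tilde W$ (resp. $\tilde W_M$) are defined via the dominant base alcove $A_0$ of $G$ (resp. the dominant base alcove of $M$), extended to the extended affine Weyl group by $\ell(\tilde w\delta)=\ell(\tilde w)$ for $\delta$ in the stabilizer of the base alcove. Affine reflections are elements $s_\alpha t_{m\alpha}$, $m\in\mathbb Z$. *)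

From HB Require Import structures.
From mathcomp Require Import all_boot all_order all_algebra.
Set Implicit Arguments. Unset Strict Implicit. Unset Printing Implicit Defensive.
Import Order.TTheory GRing.Theory Num.Theory.
Local Open Scope ring_scope.

(* X^*(T) = Z^n (row vectors); X_*(T) = Z^n via the dual basis;
   the perfect pairing <x, y> is the dot product. *)
Definition pairZ n (x y : 'rV[int]_n) : int := \sum_(i < n) x ord0 i * y ord0 i.
Definition pairQ n (x : 'rV[rat]_n) (y : 'rV[int]_n) : rat :=
  \sum_(i < n) x ord0 i * (y ord0 i)%:~R.

(* a root together with its coroot *)
Definition rcpair n := ('rV[int]_n * 'rV[int]_n)%type.

Definition reflV n (p : rcpair n) (x : 'rV[int]_n) := x - pairZ x p.2 *: p.1.
Definition coreflV n (p : rcpair n) (y : 'rV[int]_n) := y - pairZ p.1 y *: p.2.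
Definition reflM n (p : rcpair n) : 'M[int]_n := 1%:M - (p.2)^T *m p.1.

(* Reduced root datum (= root datum of a split connected reductive group). *)
Record rootDatum (n : nat) := RootDatum {
  rd_roots : seq (rcpair n);
  rd_uniq : uniq (map fst rd_roots);
  rd_two : forall p, p \in rd_roots -> pairZ p.1 p.2 = 2;
  rd_refl : forall p q, p \in rd_roots -> q \in rd_roots ->
              (reflV p q.1, coreflV p q.2) \in rd_roots;
  rd_reduced : forall p q, p \in rd_roots -> q \in rd_roots -> q.1 != 2 *: p.1
}.

(* Positive system Phi^+ (from the Borel B >= T), given by a regular
   cocharacter h: Phi^+ = {a : <a,h> > 0}. *)
Definition posRoots n (R : rootDatum n) (h : 'rV[int]_n) :=
  [seq p <- rd_roots R | 0 < pairZ p.1 h].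

(* Levi M >= T : the centralizer of a cocharacter mu; Phi_M = {a : <a,mu> = 0} *)
Definition leviRoots n (R : rootDatum n) (mu : 'rV[int]_n) :=
  [seq p <- rd_roots R | pairZ p.1 mu == 0].
Definition leviPos n (R : rootDatum n) (h mu : 'rV[int]_n) :=
  [seq p <- rd_roots R | (pairZ p.1 mu == 0) && (0 < pairZ p.1 h)].
Definition leviSimple n (R : rootDatum n) (h mu : 'rV[int]_n) :=
  [seq p <- leviPos R h mu |
     ~~ has (fun q => has (fun q' => q.1 + q'.1 == p.1) (leviPos R h mu))
            (leviPos R h mu)].

Inductive inW n (S : seq (rcpair n)) : 'M[int]_n -> Prop :=
| inW1 : inW S 1%:M
| inWS p w : p \in S -> inW S w -> inW S (w *m reflM p).

(* Elements of X^*(T) x| W: a pair (lambda, w) is the affine map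
   y |-> lambda + w(y) = t_lambda w, with w acting on row vectors by *m. *)
Definition affT n := ('rV[int]_n * 'M[int]_n)%type.
Definition toQ n (v : 'rV[int]_n) : 'rV[rat]_n := map_mx (fun z : int => z%:~R) v.
Definition toQM n (m : 'M[int]_n) : 'M[rat]_n := map_mx (fun z : int => z%:~R) m.
Definition act n (x : affT n) (y : 'rV[rat]_n) : 'rV[rat]_n :=
  toQ x.1 + y *m toQM x.2.
Definition acomp n (x1 x2 : affT n) : affT n := (x1.1 + x2.1 *m x1.2, x2.2 *m x1.2).
Definition ainv n (x : affT n) : affT n := (- (x.1 *m invmx x.2), invmx x.2).
Definition ofW n (w : 'M[int]_n) : affT n := (0, w).

(* Affine reflections of ~W_M : s_a t_{m a}, a in Phi_M, m in Z;
   as an affine map  y |-> s_a(y + m a) = s_a(y) - m a. *)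
Definition affRefl n (S : seq (rcpair n)) (r : affT n) : Prop :=
  exists2 p, p \in S & exists m : int, r = (- (m *: p.1), reflM p).

(* A point in the interior of the dominant base alcove
   A_0 = {y : 0 < <y,a^v> < 1 for all a in Phi^+}:  y0 = 2rho / N. *)
Definition rho2 n (R : rootDatum n) h : 'rV[int]_n := \sum_(p <- posRoots R h) p.1.
Definition alcPt n (R : rootDatum n) h : 'rV[rat]_n :=
  ((1 + \sum_(p <- posRoots R h) `|pairZ (rho2 R h) p.2|)%:~R)^-1 *: toQ (rho2 R h).

(* Number of affine root hyperplanes H_{a,k} = {<y,a^v> = k}, a in P (a
   positive system), separating the base alcove (containing y0) from x(A_0):
   for each a it is |floor <x(y0), a^v>|, since <y0,a^v> lies in (0,1). *)
Definition lenP n (P : seq (rcpair n)) (y0 : 'rV[rat]_n) (x : affT n) : nat :=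
  \sum_(p <- P) `| Num.floor (pairQ (act x y0) p.2) |%N.

Definition lenG n (R : rootDatum n) h (x : affT n) : nat :=
  lenP (posRoots R h) (alcPt R h) x.
(* length in ~W_M (dominant base alcove of M, which contains A_0) *)
Definition lenM n (R : rootDatum n) h mu (x : affT n) : nat :=
  lenP (leviPos R h mu) (alcPt R h) x.

Definition inWM n (R : rootDatum n) h mu (w : 'M[int]_n) : Prop :=
  inW (rd_roots R) w /\
  forall p, p \in leviSimple R h mu ->
    (lenG R h (ofW w) < lenG R h (acomp (ofW (reflM p)) (ofW w)))%N.

From mathcomp Require Import all_boot all_order all_algebra.
From mathcomp Require Import zify ring lra.
Set Implicit Arguments. Unset Strict Implicit. Unset Printing Implicit Defensive.
Import Order.TTheory GRing.Theory Num.Theory.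
Local Open Scope ring_scope.

(* Fix y0 in the base alcove.  For x in ~W, the sum over all roots b of
   |floor <y0, b^v> - floor <x y0, b^v>| counts twice the affine root
   hyperplanes separating y0 from x y0, so it equals 2 l(x); summing over all
   roots makes it compatible with the symmetries s_b.  Pairing each root c
   with s_b c shows that reflecting a point u in a hyperplane H of direction b
   that does not separate u from y0 strictly increases this count.  Hence
   l_M(z) < l_M(r z) says that the hyperplane H of r does not separate y0 from
   z y0.  For w in W^M, w^-1 maps the positive roots of M to positive roots
   (on Delta_M this is the length condition defining W^M), so y0 and w y0 lie
   in the same alcove of the arrangement of M, and so do z y0 and z w y0.
   Thus H does not separate w y0 from z w y0, i.e. w^-1 H does not separate
   y0 from (w^-1 z w) y0, and the reflection w^-1 r w in w^-1 H increases the
   length in ~W. *)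

Section Pairing.
Variable n : nat.
Implicit Types (x y c d : 'rV[int]_n) (A B : 'M[int]_n) (u v : 'rV[rat]_n).

Lemma pairZE x c : pairZ x c = (x *m c^T) ord0 ord0.
Proof. by rewrite /pairZ !mxE; apply: eq_bigr => i _; rewrite mxE. Qed.

Lemma pairQE u c : pairQ u c = (u *m (toQ c)^T) ord0 ord0.
Proof. by rewrite /pairQ !mxE; apply: eq_bigr => i _; rewrite !mxE. Qed.

Lemma toQM_mulmx A B : toQM (A *m B) = toQM A *m toQM B.
Proof. exact: map_mxM. Qed.

Lemma toQ_mulmx x A : toQ (x *m A) = toQ x *m toQM A.
Proof. exact: map_mxM. Qed.

Lemma toQD x y : toQ (x + y) = toQ x + toQ y.
Proof. exact: map_mxD. Qed.

Lemma toQN x : toQ (- x) = - toQ x.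
Proof. exact: map_mxN. Qed.

Lemma toQZ (k : int) x : toQ (k *: x) = k%:~R *: toQ x.
Proof. by apply/rowP => i; rewrite !mxE intrM. Qed.

Lemma toQ0 : toQ (0 : 'rV[int]_n) = 0.
Proof. by apply/rowP => i; rewrite !mxE. Qed.

Lemma toQM1 : toQM (1%:M : 'M[int]_n) = 1%:M.
Proof. exact: map_mx1. Qed.

Lemma toQM_tr A : toQM A^T = (toQM A)^T.
Proof. by rewrite /toQM map_trmx. Qed.

Lemma pairZC x y : pairZ x y = pairZ y x.
Proof. by apply: eq_bigr => i _; rewrite mulrC. Qed.

Lemma pairQ_mulmx u c A : pairQ (u *m toQM A) c = pairQ u (c *m A^T).
Proof. by rewrite !pairQE toQ_mulmx trmx_mul toQM_tr trmxK mulmxA. Qed.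

Lemma pairQ_toQ x c : pairQ (toQ x) c = (pairZ x c)%:~R.
Proof.
by rewrite /pairQ /pairZ rmorph_sum /=; apply: eq_bigr => i _; rewrite mxE intrM.
Qed.

Lemma pairZD x y c : pairZ (x + y) c = pairZ x c + pairZ y c.
Proof. by rewrite !pairZE mulmxDl mxE. Qed.

Lemma pairZN x c : pairZ (- x) c = - pairZ x c.
Proof. by rewrite !pairZE mulNmx mxE. Qed.

Lemma pairZZ (k : int) x c : pairZ (k *: x) c = k * pairZ x c.
Proof. by rewrite !pairZE -scalemxAl mxE. Qed.

Lemma pairZ_rD x c d : pairZ x (c + d) = pairZ x c + pairZ x d.
Proof. by rewrite pairZC pairZD !(pairZC x). Qed.

Lemma pairZ_rN x c : pairZ x (- c) = - pairZ x c.
Proof. by rewrite pairZC pairZN pairZC. Qed.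

Lemma pairZ_rZ x (k : int) c : pairZ x (k *: c) = k * pairZ x c.
Proof. by rewrite pairZC pairZZ pairZC. Qed.

Lemma pairZ_suml (I : Type) (r : seq I) (F : I -> 'rV[int]_n) c :
  pairZ (\sum_(i <- r) F i) c = \sum_(i <- r) pairZ (F i) c.
Proof.
elim: r => [|a r IH]; first by rewrite !big_nil pairZE mul0mx mxE.
by rewrite !big_cons pairZD IH.
Qed.

Lemma pairQD u v c : pairQ (u + v) c = pairQ u c + pairQ v c.
Proof. by rewrite !pairQE mulmxDl mxE. Qed.

Lemma pairQN u c : pairQ (- u) c = - pairQ u c.
Proof. by rewrite !pairQE mulNmx mxE. Qed.

Lemma pairQZ (k : rat) u c : pairQ (k *: u) c = k * pairQ u c.
Proof. by rewrite !pairQE -scalemxAl mxE. Qed.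

Lemma pairQ_rD u c d : pairQ u (c + d) = pairQ u c + pairQ u d.
Proof. by rewrite !pairQE toQD linearD /= mulmxDr mxE. Qed.

Lemma pairQ_rN u c : pairQ u (- c) = - pairQ u c.
Proof. by rewrite !pairQE toQN linearN /= mulmxN mxE. Qed.

Lemma pairQ_rZ u (k : int) c : pairQ u (k *: c) = k%:~R * pairQ u c.
Proof. by rewrite !pairQE toQZ linearZ /= -scalemxAr mxE. Qed.

End Pairing.

Section Reflections.
Variable n : nat.
Implicit Types (x y : 'rV[int]_n) (A W : 'M[int]_n) (p q c : rcpair n)
  (S Phi : seq (rcpair n)).

Definition reflRC p c : rcpair n := (reflV p c.1, coreflV p c.2).

Definition oppRC c : rcpair n := (- c.1, - c.2).

Definition refl_stable Phi p :=
  pairZ p.1 p.2 = 2 /\ forall c, c \in Phi -> reflRC p c \in Phi.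

Lemma mx11_mulmx (R : pzRingType) m (a : 'M[R]_1) (B : 'M[R]_(1, m)) :
  a *m B = a ord0 ord0 *: B.
Proof. by rewrite {1}[a]mx11_scalar mul_scalar_mx. Qed.

Lemma reflVE p x : reflV p x = x *m reflM p.
Proof. by rewrite /reflV /reflM mulmxBr mulmx1 mulmxA mx11_mulmx -pairZE. Qed.

Lemma coreflVE p y : coreflV p y = y *m (reflM p)^T.
Proof.
rewrite /coreflV /reflM linearB /= trmx1 trmx_mul trmxK mulmxBr mulmx1.
by rewrite mulmxA mx11_mulmx -pairZE pairZC.
Qed.

Lemma reflM_invol p : pairZ p.1 p.2 = 2 -> reflM p *m reflM p = 1%:M.
Proof.
move=> p2; rewrite /reflM mulmxBl mul1mx mulmxBr mulmx1.
have -> : (p.2)^T *m p.1 *m ((p.2)^T *m p.1) = 2%:R *: ((p.2)^T *m p.1).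
  have e : p.1 *m (p.2)^T = (2%:R)%:M by rewrite [LHS]mx11_scalar -pairZE p2.
  by rewrite mulmxA -[(p.2)^T *m p.1 *m (p.2)^T]mulmxA e mul_mx_scalar -scalemxAl.
by rewrite scaler_nat mulr2n; apply/matrixP => i j; rewrite !mxE; ring.
Qed.

Lemma reflV_self p : pairZ p.1 p.2 = 2 -> reflV p p.1 = - p.1.
Proof. by move=> p2; rewrite /reflV p2; apply/rowP => i; rewrite !mxE; ring. Qed.

Lemma coreflV_self p : pairZ p.1 p.2 = 2 -> coreflV p p.2 = - p.2.
Proof. by move=> p2; rewrite /coreflV p2; apply/rowP => i; rewrite !mxE; ring. Qed.

Lemma reflRC_self p : pairZ p.1 p.2 = 2 -> reflRC p p = oppRC p.
Proof. by move=> p2; rewrite /reflRC reflV_self // coreflV_self. Qed.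

Lemma reflV_invol p x : pairZ p.1 p.2 = 2 -> reflV p (reflV p x) = x.
Proof. by move=> p2; rewrite !reflVE -mulmxA reflM_invol // mulmx1. Qed.

Lemma coreflV_invol p y : pairZ p.1 p.2 = 2 -> coreflV p (coreflV p y) = y.
Proof. by move=> p2; rewrite !coreflVE -mulmxA -trmx_mul reflM_invol // trmx1 mulmx1. Qed.

Lemma reflRC_invol p c : pairZ p.1 p.2 = 2 -> reflRC p (reflRC p c) = c.
Proof. by move=> p2; rewrite /reflRC /= reflV_invol // coreflV_invol //; case: c. Qed.

Lemma pairZ_coreflV p y : pairZ p.1 p.2 = 2 ->
  pairZ p.1 (coreflV p y) = - pairZ p.1 y.
Proof. by move=> p2; rewrite /coreflV pairZ_rD pairZ_rN pairZ_rZ p2; ring. Qed.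

Lemma pairQ_coreflV p u y :
  pairQ u (coreflV p y) = pairQ u y - (pairZ p.1 y)%:~R * pairQ u p.2.
Proof. by rewrite /coreflV pairQ_rD pairQ_rN pairQ_rZ. Qed.

Lemma big_reflRC (R : Type) (idx : R) (op : Monoid.com_law idx) Phi p
    (F : rcpair n -> R) :
  uniq Phi -> refl_stable Phi p ->
  \big[op/idx]_(c <- Phi) F (reflRC p c) = \big[op/idx]_(c <- Phi) F c.
Proof.
move=> uPhi [p2 stab]; rewrite -(big_map (reflRC p) xpredT F); apply: perm_big.
apply: uniq_perm => //.
  by rewrite map_inj_uniq //; apply: (can_inj (g := reflRC p)) => c; exact: reflRC_invol.
move=> c; apply/mapP/idP => [[c' hc' ->]|hc]; first exact: stab.
by exists (reflRC p c); [exact: stab | rewrite reflRC_invol].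
Qed.

Lemma reflM_conj W p q : W \in unitmx ->
  q.2 = p.2 *m W^T -> q.1 = p.1 *m invmx W ->
  reflM p *m invmx W = invmx W *m reflM q.
Proof.
move=> WU q2 q1; rewrite /reflM mulmxBl mul1mx mulmxBr mulmx1 q2 q1.
by rewrite trmx_mul trmxK !mulmxA mulVmx // mul1mx.
Qed.

Lemma inW_sub S S' W : {subset S <= S'} -> inW S W -> inW S' W.
Proof. by move=> sS; elim=> [|p w hp _ IH]; [exact: inW1 | apply: inWS; auto]. Qed.

Lemma inW_mulmx S A W : inW S A -> inW S W -> inW S (A *m W).
Proof.
move=> hA; elim=> [|p w hp _ IH]; first by rewrite mulmx1.
by rewrite mulmxA; apply: inWS.
Qed.

Lemma inW_reflM S p : p \in S -> inW S (reflM p).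
Proof. by move=> hp; rewrite -[reflM p]mul1mx; apply: inWS => //; exact: inW1. Qed.

Lemma inW_unit_inv S W : (forall p, p \in S -> pairZ p.1 p.2 = 2) ->
  inW S W -> W \in unitmx /\ inW S (invmx W).
Proof.
move=> S2 hW.
have [W' hW' WW'] : exists2 W', inW S W' & W *m W' = 1%:M.
  elim: hW => [|q w hq _ [w' hw' ww']].
    by exists 1%:M; rewrite ?mulmx1 //; exact: inW1.
  exists (reflM q *m w'); last by rewrite mulmxA -(mulmxA w) reflM_invol ?S2 // mulmx1.
  elim: hw' {ww'} => [|q' v hq' _ IH]; first by rewrite mulmx1; exact: inW_reflM.
  by rewrite mulmxA; apply: inWS.
have [uW _] := mulmx1_unit WW'.
by split=> //; rewrite -[invmx W]mulmx1 -WW' mulKmx.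
Qed.

Lemma inW_transport S Phi W : (forall p, p \in S -> refl_stable Phi p) ->
  inW S W -> forall c, c \in Phi ->
  exists2 d, d \in Phi & d.2 = c.2 *m W^T /\ d.1 *m W = c.1.
Proof.
move=> stabS; elim=> [|q w hq _ IH] c hc; first by exists c; rewrite ?trmx1 ?mulmx1.
have [q2 stab] := stabS _ hq.
have [d hd [e2 e1]] := IH _ (stab _ hc).
exists d => //; split; first by rewrite e2 /= coreflVE trmx_mul mulmxA.
by rewrite mulmxA e1 /= reflVE -mulmxA reflM_invol // mulmx1.
Qed.

End Reflections.

Section Floors.
Local Notation fl := (@Num.floor rat).
Implicit Types (x y : rat) (k e : int).

Lemma floorDz x k : fl (x + k%:~R) = fl x + k.
Proof. by rewrite floorDrz ?intr_int // intrKfloor. Qed.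

Lemma floorBz x k : fl (x - k%:~R) = fl x - k.
Proof. by rewrite -mulrNz floorDz. Qed.

Lemma floorN_notint x : x \isn't a Num.int -> fl (- x) = - fl x - 1.
Proof.
move=> xZ; have := ceilNfloor x; rewrite ceil_floor xZ /= => e.
by rewrite -[fl (- x)]opprK -e opprD.
Qed.

Lemma mulr_ge0_signs x y :
  0 <= x * y -> (0 <= x) && (0 <= y) || (x <= 0) && (y <= 0).
Proof.
move=> xy; case: (ltrgt0P x) => hx /=.
- by rewrite (pmulr_rge0 _ hx) in xy; rewrite xy.
- by rewrite (nmulr_rge0 _ hx) in xy.
- by case: lerP => // /ltW.
Qed.

Lemma mulr_gt0_signs x y :
  0 < x * y -> (0 < x) && (0 < y) || (x < 0) && (y < 0).
Proof.
move=> xy; case: (ltrgt0P x) => hx /=.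
- by rewrite orbF -(pmulr_rgt0 _ hx).
- by rewrite -(nmulr_rgt0 _ hx).
- by move: xy; rewrite hx mul0r ltxx.
Qed.

Lemma mulr_gt0_trans x y x0 y0 :
  0 < x0 * y0 -> 0 < x * x0 -> 0 < y * y0 -> 0 < x * y.
Proof.
move=> h0 hx hy; have : 0 < (x * y) * (x0 * y0) by rewrite mulrACA; exact: mulr_gt0.
by rewrite pmulr_lgt0.
Qed.

(* The terms of a root c and of s_b c, before and after reflecting u in the
   hyperplane <., b^v> = -m: a0, a1 are <y, c^v>, <u, c^v> and b0, b1 are
   <y, (s_b c)^v>, <u, (s_b c)^v>, with e = m <b, c^v>. *)
Lemma floor_pair_le (a0 a1 b0 b1 : rat) e :
  0 <= (a0 - b0 + e%:~R) * (a1 - b1 + e%:~R) ->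
  (`|fl a0 - fl a1| + `|fl b0 - fl b1| <=
   `|fl a0 - fl (b1 - e%:~R)| + `|fl b0 - fl (a1 + e%:~R)|)%N.
Proof.
have ge x y : 0 <= x - y + e%:~R -> fl y - e <= fl x.
  by move=> h; rewrite -floorBz; apply: le_floor; lra.
have le x y : x - y + e%:~R <= 0 -> fl x <= fl y - e.
  by move=> h; rewrite -floorBz; apply: le_floor; lra.
rewrite floorBz floorDz => /mulr_ge0_signs /orP [] /andP [h0 h1].
  by have := ge _ _ h0; have := ge _ _ h1; lia.
by have := le _ _ h0; have := le _ _ h1; lia.
Qed.

Lemma floor_pair_lt x y k :
  x \isn't a Num.int -> y \isn't a Num.int ->
  0 < (x + k%:~R) * (y + k%:~R) ->
  (`|fl x - fl y| + `|fl (- x) - fl (- y)| <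
   `|fl x - fl (- y - (k * 2)%:~R)| + `|fl (- x) - fl (y + (k * 2)%:~R)|)%N.
Proof.
move=> xZ yZ /mulr_gt0_signs hxy.
rewrite floorBz floorDz !floorN_notint //.
case/orP: hxy => /andP [hx hy].
  have : - k <= fl x by rewrite floor_ge_int mulrNz; lra.
  have : - k <= fl y by rewrite floor_ge_int mulrNz; lra.
  lia.
have : fl x < - k by rewrite floor_lt_int mulrNz; lra.
have : fl y < - k by rewrite floor_lt_int mulrNz; lra.
lia.
Qed.

Lemma notint_addz x k :
  (x + k%:~R \isn't a Num.int) = (x \isn't a Num.int).
Proof. by rewrite rpredDr ?intr_int. Qed.

Lemma notint_addz_neq0 x k :
  x \isn't a Num.int -> x + k%:~R != 0.
Proof.
by move=> xZ; apply: contraNneq xZ => /eqP; rewrite addr_eq0 => /eqP ->;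
  rewrite rpredN intr_int.
Qed.

Lemma floor_frac0 (k N : int) : 0 < k -> k < N ->
  ((N%:~R : rat)^-1 * k%:~R) \isn't a Num.int /\
  fl ((N%:~R : rat)^-1 * k%:~R) = 0.
Proof.
move=> k0 kN; have {}k0 : (0 : rat) < k%:~R by rewrite ltr0z.
have {}kN : (k%:~R : rat) < N%:~R by rewrite ltr_int.
have q0 : 0 < (N%:~R : rat)^-1 * k%:~R by rewrite mulr_gt0 ?invr_gt0 //; lra.
have q1 : (N%:~R : rat)^-1 * k%:~R < 1 by rewrite mulrC ltr_pdivrMr ?mul1r //; lra.
have fl0 : fl ((N%:~R : rat)^-1 * k%:~R) = 0.
  by apply: floor_def; rewrite add0r ltW.
by split=> //; rewrite intrEfloor fl0 mulr0z lt_eqF.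
Qed.

Definition same_cell x y := [/\ fl x = fl y, x \isn't a Num.int & y \isn't a Num.int].

Lemma same_cellDl k x y : same_cell x y -> same_cell (k%:~R + x) (k%:~R + y).
Proof.
by case=> e xZ yZ; split; rewrite ?rpredDl ?intr_int // !(addrC k%:~R) !floorDz e.
Qed.

Lemma same_cell_side x y k : same_cell x y -> 0 < (x + k%:~R) * (y + k%:~R).
Proof.
case=> e xZ yZ.
have lt_floor z : z \isn't a Num.int -> (fl z)%:~R < z.
  move=> zZ; rewrite lt_neqAle floor_le andbT.
  by apply: contra zZ => /eqP <-; rewrite intr_int.
have := lt_floor _ xZ; have := lt_floor _ yZ; have := floorD1_gt x; have := floorD1_gt y.
rewrite -e !intrD; set F := fl x => x1 y1 x0 y0.
case: (lerP (- F) k) => hk.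
  have : ((- F)%:~R : rat) <= k%:~R by rewrite ler_int.
  by rewrite mulrNz => hk'; apply: mulr_gt0; lra.
have : (k%:~R : rat) <= (- F - 1)%:~R by rewrite ler_int; lia.
by rewrite intrB mulrNz => hk'; rewrite -mulrNN; apply: mulr_gt0; lra.
Qed.

End Floors.

Section Separation.
Variable n : nat.
Variable Phi : seq (rcpair n).
Local Notation fl := (@Num.floor rat).
Implicit Types (b c : rcpair n) (m : int) (y u : 'rV[rat]_n).

Definition nsep y u := (\sum_(c <- Phi) `|fl (pairQ y c.2) - fl (pairQ u c.2)|)%N.

Definition refl_pt b m u := u *m toQM (reflM b) - m%:~R *: toQ b.1.

Definition same_side b m y u := 0 < (pairQ y b.2 + m%:~R) * (pairQ u b.2 + m%:~R).

Lemma pairQ_refl_pt b m u (c : 'rV[int]_n) :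
  pairQ (refl_pt b m u) c = pairQ u (coreflV b c) - (m * pairZ b.1 c)%:~R.
Proof. by rewrite pairQD pairQN pairQ_mulmx -coreflVE pairQZ pairQ_toQ intrM. Qed.

Lemma pairQ_refl_pt_self b m u : pairZ b.1 b.2 = 2 ->
  pairQ (refl_pt b m u) b.2 + m%:~R = - (pairQ u b.2 + m%:~R).
Proof.
by move=> b2; rewrite pairQ_refl_pt b2 coreflV_self // pairQ_rN intrM; ring.
Qed.

Lemma refl_pt_invol b m u : pairZ b.1 b.2 = 2 -> refl_pt b m (refl_pt b m u) = u.
Proof.
move=> b2; rewrite /refl_pt mulmxBl -mulmxA -toQM_mulmx reflM_invol // toQM1 mulmx1.
rewrite -scalemxAl -toQ_mulmx -reflVE reflV_self // toQN scalerN.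
by rewrite opprK addrK.
Qed.

Hypothesis uPhi : uniq Phi.

Lemma nsep_refl_lt b m y u : b \in Phi -> refl_stable Phi b ->
  pairQ y b.2 \isn't a Num.int -> pairQ u b.2 \isn't a Num.int ->
  same_side b m y u -> (nsep y u < nsep y (refl_pt b m u))%N.
Proof.
move=> bPhi stab yZ uZ side; have [b2 _] := stab.
set ru := refl_pt b m u; rewrite /nsep.
set sep := fun v c => `|fl (pairQ y c.2) - fl (pairQ v c.2)|%N.
have pair_le c :
    (sep u c + sep u (reflRC b c) <= sep ru c + sep ru (reflRC b c))%N.
  rewrite /sep /= !pairQ_refl_pt coreflV_invol // pairZ_coreflV // mulrN mulrNz opprK.
  apply: floor_pair_le; rewrite !pairQ_coreflV.
  set k := pairZ b.1 c.2.
  have e v : pairQ v c.2 - (pairQ v c.2 - k%:~R * pairQ v b.2) + (m * k)%:~R =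
             k%:~R * (pairQ v b.2 + m%:~R) by rewrite intrM; ring.
  by rewrite !e mulrACA; apply: mulr_ge0; [rewrite -expr2 sqr_ge0 | exact: ltW].
have pair_lt : (sep u b + sep u (reflRC b b) < sep ru b + sep ru (reflRC b b))%N.
  rewrite /sep /= !pairQ_refl_pt coreflV_invol // pairZ_coreflV // coreflV_self //.
  by rewrite !pairQ_rN b2 mulrN mulrNz opprK; exact: floor_pair_lt.
suff : (\sum_(c <- Phi) (sep u c + sep u (reflRC b c)) <
         \sum_(c <- Phi) (sep ru c + sep ru (reflRC b c)))%N.
  have sum_reflRC v : (\sum_(c <- Phi) sep v (reflRC b c) = \sum_(c <- Phi) sep v c)%N.
    exact: big_reflRC.
  by rewrite !big_split /= !sum_reflRC !addnn ltn_double; apply.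
rewrite (big_rem b bPhi) [X in (_ < X)%N](big_rem b bPhi) /=.
exact: leq_trans (leq_add pair_lt (leq_sum _ (fun c _ => pair_le c))).
Qed.

Lemma same_side_of_nsep_lt b m y u : b \in Phi -> refl_stable Phi b ->
  pairQ y b.2 \isn't a Num.int -> pairQ u b.2 \isn't a Num.int ->
  (nsep y u < nsep y (refl_pt b m u))%N -> same_side b m y u.
Proof.
move=> bPhi stab yZ uZ lt_sep; have [b2 _] := stab.
rewrite /same_side ltNge; apply/negP => le0.
have ruZ : pairQ (refl_pt b m u) b.2 \isn't a Num.int.
  by rewrite -(notint_addz _ m) pairQ_refl_pt_self // rpredN notint_addz.
have ru_side : same_side b m y (refl_pt b m u).
  rewrite /same_side pairQ_refl_pt_self // mulrN oppr_gt0 lt_neqAle le0 andbT.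
  by rewrite mulf_neq0 // notint_addz_neq0.
have := nsep_refl_lt bPhi stab yZ ruZ ru_side; rewrite refl_pt_invol //; lia.
Qed.

End Separation.

Section AffineAction.
Variable n : nat.
Implicit Types (b d : rcpair n) (m : int) (u : 'rV[rat]_n) (x : affT n) (W : 'M[int]_n).

Lemma act_comp x1 x2 u : act (acomp x1 x2) u = act x1 (act x2 u).
Proof. by rewrite /act /= toQD toQ_mulmx toQM_mulmx mulmxDl mulmxA addrA. Qed.

Lemma act_ofW W u : act (ofW W) u = u *m toQM W.
Proof. by rewrite /act /= toQ0 add0r. Qed.

Lemma act_ainv_ofW W u : act (ainv (ofW W)) u = u *m toQM (invmx W).
Proof. by rewrite /act /= mul0mx oppr0 toQ0 add0r. Qed.

Definition conj_by W x : affT n := acomp (ainv (ofW W)) (acomp x (ofW W)).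

Lemma act_conj_by W x u :
  act (conj_by W x) u = act x (u *m toQM W) *m toQM (invmx W).
Proof. by rewrite !act_comp act_ofW act_ainv_ofW. Qed.

Lemma act_affRefl b m u : act (- (m *: b.1), reflM b) u = refl_pt b m u.
Proof. by rewrite /act /refl_pt /= toQN toQZ addrC. Qed.

Lemma pairQ_act x u (d : 'rV[int]_n) :
  pairQ (act x u) d = (pairZ x.1 d)%:~R + pairQ u (d *m x.2^T).
Proof. by rewrite pairQD pairQ_toQ pairQ_mulmx. Qed.

Lemma refl_pt_conj W b d m u : W \in unitmx ->
  d.2 = b.2 *m W^T -> d.1 = b.1 *m invmx W ->
  refl_pt b m u *m toQM (invmx W) = refl_pt d m (u *m toQM (invmx W)).
Proof.
move=> WU d2 d1; rewrite /refl_pt mulmxBl -!mulmxA -!toQM_mulmx (reflM_conj WU d2 d1).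
by rewrite -scalemxAl -toQ_mulmx -d1.
Qed.

End AffineAction.

Section Alcoves.
Variable n : nat.
Variable Phi : seq (rcpair n).
Local Notation fl := (@Num.floor rat).
Implicit Types (b c : rcpair n) (m : int) (y u : 'rV[rat]_n) (x : affT n)
  (S : seq (rcpair n)).

Definition off_walls u := forall c, c \in Phi -> pairQ u c.2 \isn't a Num.int.

Definition same_alcove y u :=
  forall c, c \in Phi -> same_cell (pairQ y c.2) (pairQ u c.2).

Lemma off_walls_act S x u : (forall p, p \in S -> refl_stable Phi p) ->
  inW S x.2 -> off_walls u -> off_walls (act x u).
Proof.
move=> stabS xW uoff c cPhi; have [d dPhi [e2 _]] := inW_transport stabS xW cPhi.
by rewrite pairQ_act -e2 addrC notint_addz; exact: uoff.
Qed.

Lemma same_alcove_act S x y u : (forall p, p \in S -> refl_stable Phi p) ->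
  inW S x.2 -> same_alcove y u -> same_alcove (act x y) (act x u).
Proof.
move=> stabS xW yu c cPhi; have [d dPhi [e2 _]] := inW_transport stabS xW cPhi.
by rewrite !pairQ_act -e2; apply: same_cellDl; exact: yu.
Qed.

Lemma same_side_alcove b m y y' u u' : b \in Phi ->
  same_alcove y y' -> same_alcove u u' -> same_side b m y u -> same_side b m y' u'.
Proof.
move=> bPhi yy uu side; apply: (mulr_gt0_trans side); rewrite mulrC.
  exact: same_cell_side (yy _ bPhi).
exact: same_cell_side (uu _ bPhi).
Qed.

Variable h : 'rV[int]_n.
Hypothesis uPhi : uniq Phi.
Hypothesis oppPhi : forall c, c \in Phi -> oppRC c \in Phi.
Hypothesis h_reg : forall c, c \in Phi -> pairZ c.1 h != 0.
Local Notation pos c := (0 < pairZ c.1 h).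

Lemma perm_neg_roots :
  perm_eq [seq c <- Phi | ~~ pos c] [seq oppRC c | c <- Phi & pos c].
Proof.
apply: uniq_perm; first exact: filter_uniq.
  rewrite map_inj_uniq ?filter_uniq // => -[a b] [c d] [] /eqP.
  by rewrite eqr_opp => /eqP -> /eqP; rewrite eqr_opp => /eqP ->.
move=> c; rewrite mem_filter; apply/andP/mapP => [[neg_c cPhi]|[d]].
  exists (oppRC c); last by rewrite /oppRC /= !opprK; case: c {neg_c cPhi}.
  by rewrite mem_filter oppPhi // andbT /= pairZN oppr_gt0 lt_neqAle h_reg //= leNgt.
rewrite mem_filter => /andP [pos_d dPhi] ->; split; last exact: oppPhi.
by rewrite /= pairZN oppr_gt0 -leNgt ltW.
Qed.

Lemma nsep_lenP y x : off_walls y -> off_walls (act x y) ->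
  (forall c, c \in Phi -> pos c -> fl (pairQ y c.2) = 0) ->
  nsep Phi y (act x y) = (2 * lenP [seq c <- Phi | pos c] y x)%N.
Proof.
move=> yoff xoff y_base; rewrite /nsep /lenP (bigID (fun c => pos c)) /= addnC.
rewrite -big_filter (perm_big _ perm_neg_roots) big_map big_filter -big_split /=.
rewrite mul2n -addnn big_filter -big_split /= big_seq_cond [RHS]big_seq_cond.
apply: eq_bigr => c /andP [cPhi pos_c].
rewrite /= !pairQ_rN !floorN_notint ?yoff ?xoff //.
rewrite y_base //; set F := fl _.
by rewrite (_ : -1 - (- F - 1) = F) ?sub0r ?abszN ?addnC //; ring.
Qed.

End Alcoves.

Lemma off_walls_sub n (S Phi : seq (rcpair n)) u :
  {subset S <= Phi} -> off_walls Phi u -> off_walls S u.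
Proof. by move=> sub uoff c /sub; exact: uoff. Qed.

Section RootDatum.
Variable n : nat.
Variable R : rootDatum n.
Variable h : 'rV[int]_n.
Local Notation Phi := (rd_roots R).
Local Notation y0 := (alcPt R h).
Local Notation fl := (@Num.floor rat).
Local Notation pos c := (0 < pairZ c.1 h).
Implicit Types (a b c d : rcpair n) (w : 'M[int]_n) (m : int) (v : 'rV[rat]_n)
  (x : affT n).

Lemma rd_uniq_roots : uniq Phi.
Proof. exact: map_uniq (rd_uniq R). Qed.

Lemma rd_refl_stable c : c \in Phi -> refl_stable Phi c.
Proof.
by move=> cPhi; split=> [|d dPhi]; [exact: rd_two cPhi | exact: rd_refl cPhi dPhi].
Qed.

Lemma rd_transport w b : inW Phi w -> b \in Phi ->
  exists2 d, d \in Phi & d.2 = b.2 *m w^T /\ d.1 = b.1 *m invmx w.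
Proof.
move=> wW bPhi; have [d dPhi [d2 d1]] := inW_transport rd_refl_stable wW bPhi.
have [wU _] := inW_unit_inv (@rd_two _ R) wW.
by exists d => //; split=> //; rewrite -d1 mulmxK.
Qed.

Lemma rd_opp c : c \in Phi -> oppRC c \in Phi.
Proof. by move=> cPhi; rewrite -reflRC_self ?(rd_two cPhi) //; exact: rd_refl. Qed.

(* Summing g a + g (s_b a) over all roots a gives twice <2 rho, b^v>, where
   g a = [a > 0] <a, b^v>.  Since <s_b a, b^v> = - <a, b^v>, each term is
   nonnegative, and the term for a = b is 2. *)
Lemma rho2_pos b : b \in posRoots R h -> 0 < pairZ (rho2 R h) b.2.
Proof.
rewrite mem_filter => /andP [pos_b bPhi].
rewrite /rho2 pairZ_suml big_filter big_mkcond /=.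
set g := fun a : rcpair n => if pos a then pairZ a.1 b.2 else 0.
have [b2 _] := rd_refl_stable bPhi.
have pair_ge0 a : 0 <= g a + g (reflRC b a).
  rewrite /g /reflRC /= /reflV pairZD pairZN pairZZ pairZD pairZN pairZZ b2.
  set x := pairZ a.1 b.2; set y := pairZ a.1 h; move: pos_b; set z := pairZ b.1 h => z0.
  by case: (ltrP 0 y) => hy; case: (ltrP 0 (y - x * z)) => hyz; nia.
have pair_b : 0 < g b + g (reflRC b b).
  by rewrite reflRC_self // /g /= pairZN pos_b b2 oppr_gt0 (lt_gtF pos_b) addr0.
suff : 0 < \sum_(a <- Phi) (g a + g (reflRC b a)).
  rewrite big_split /= (big_reflRC _ _ rd_uniq_roots (rd_refl_stable bPhi)).
  by rewrite -mulr2n pmulrn_lgt0.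
rewrite (big_rem b bPhi) /=; apply: (lt_le_trans pair_b).
by rewrite lerDl; apply: sumr_ge0 => a _.
Qed.

Lemma alcPt_pos_root c : c \in posRoots R h ->
  pairQ y0 c.2 \isn't a Num.int /\ fl (pairQ y0 c.2) = 0.
Proof.
move=> cpos; rewrite pairQZ pairQ_toQ; apply: floor_frac0; first exact: rho2_pos.
rewrite -[X in X < _]gtr0_norm ?rho2_pos // ltz1D (big_rem c cpos) /= lerDl.
exact: sumr_ge0.
Qed.

Hypothesis h_reg : forall c, c \in Phi -> pairZ c.1 h != 0.

Lemma opp_posRoots c : c \in Phi -> ~~ pos c -> oppRC c \in posRoots R h.
Proof.
move=> cPhi neg_c; rewrite mem_filter rd_opp // andbT /= pairZN oppr_gt0.
by rewrite lt_neqAle h_reg //= leNgt.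
Qed.

Lemma alcPt_floor c : c \in Phi ->
  pairQ y0 c.2 \isn't a Num.int /\ fl (pairQ y0 c.2) = if pos c then 0 else -1.
Proof.
move=> cPhi; have [pos_c|neg_c] := boolP (pos c).
  by apply: alcPt_pos_root; rewrite mem_filter pos_c.
have [Z fl0] := alcPt_pos_root (opp_posRoots cPhi neg_c).
move: Z fl0; rewrite pairQ_rN rpredN => Z; rewrite floorN_notint //.
by split=> //; lia.
Qed.

Lemma alcPt_off_walls : off_walls Phi y0.
Proof. by move=> c /alcPt_floor []. Qed.

Lemma alcPt_pair_gt0 c : c \in Phi -> pos c -> 0 < pairQ y0 c.2.
Proof.
move=> /alcPt_floor [Z fl_c] pos_c; rewrite pos_c in fl_c.
have := floor_le (pairQ y0 c.2); rewrite fl_c mulr0z lt_def => ->.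
by rewrite andbT; apply: contraNneq Z => ->; rewrite rpred0.
Qed.

Lemma alcPt_pair_lt0 c : c \in Phi -> ~~ pos c -> pairQ y0 c.2 < 0.
Proof.
move=> /alcPt_floor [_ fl_c] /negbTE neg_c; rewrite neg_c in fl_c.
by have := floorD1_gt (pairQ y0 c.2); rewrite fl_c addNr mulr0z.
Qed.

Lemma lenG_nsep x : inW Phi x.2 -> nsep Phi y0 (act x y0) = (2 * lenG R h x)%N.
Proof.
move=> xW; apply: nsep_lenP => //; [exact: rd_uniq_roots | exact: rd_opp |
  exact: alcPt_off_walls | | ].
  exact: off_walls_act rd_refl_stable xW alcPt_off_walls.
by move=> c cPhi pos_c; have [_ ->] := alcPt_floor cPhi; rewrite pos_c.
Qed.

Lemma lenG_conj_lt w a m x : inW Phi w -> a \in Phi -> inW Phi x.2 ->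
  same_side a m (y0 *m toQM w) (act x (y0 *m toQM w)) ->
  (lenG R h (conj_by w x) < lenG R h (conj_by w (acomp (- (m *: a.1), reflM a) x)))%N.
Proof.
move=> wW aPhi xW side.
have [wU wiW] := inW_unit_inv (@rd_two _ R) wW.
have [d dPhi [d2 d1]] := rd_transport wW aPhi.
have conjW y : inW Phi y.2 -> inW Phi (conj_by w y).2.
  by move=> yW; do 2![apply: inW_mulmx => //].
have uoff : off_walls Phi (act (conj_by w x) y0).
  exact: off_walls_act rd_refl_stable (conjW _ xW) alcPt_off_walls.
rewrite -(ltn_pmul2l (isT : (0 < 2)%N)) -!lenG_nsep;
  try (apply: conjW => //; exact: inWS).
move: uoff; rewrite !act_conj_by act_comp act_affRefl (refl_pt_conj _ _ wU d2 d1) => uoff.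
have pair_d v : pairQ (v *m toQM (invmx w)) d.2 = pairQ v a.2.
  by rewrite pairQ_mulmx d2 -mulmxA -trmx_mul mulVmx // trmx1 mulmx1.
apply: nsep_refl_lt => //; [exact: rd_uniq_roots | exact: rd_refl_stable |
  exact: alcPt_off_walls | exact: uoff |].
by move: side; rewrite /same_side pair_d pairQ_mulmx -d2.
Qed.

End RootDatum.

Section Levi.
Variable n : nat.
Variable R : rootDatum n.
Variables h mu : 'rV[int]_n.
Hypothesis h_reg : forall c, c \in rd_roots R -> pairZ c.1 h != 0.
Local Notation Phi := (rd_roots R).
Local Notation PhiM := (leviRoots R mu).
Local Notation y0 := (alcPt R h).
Local Notation pos c := (0 < pairZ c.1 h).
Implicit Types (a b c d : rcpair n) (m : int) (x : affT n).

Lemma leviRoots_sub : {subset PhiM <= Phi}.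
Proof. by move=> c; rewrite mem_filter => /andP []. Qed.

Lemma levi_uniq_roots : uniq PhiM.
Proof. by rewrite filter_uniq // rd_uniq_roots. Qed.

Lemma levi_refl_stable c : c \in PhiM -> refl_stable PhiM c.
Proof.
move=> cM; have [c2 stab] := rd_refl_stable (leviRoots_sub cM); split=> // d.
move: cM; rewrite !mem_filter => /andP [c_mu _] /andP [d_mu dPhi].
rewrite stab // andbT /= /reflV pairZD pairZN pairZZ (eqP c_mu) (eqP d_mu).
by rewrite mulr0 subr0.
Qed.

Lemma levi_opp c : c \in PhiM -> oppRC c \in PhiM.
Proof.
rewrite !mem_filter => /andP [c_mu cPhi].
by rewrite rd_opp // andbT pairZN (eqP c_mu) oppr0.
Qed.

Lemma leviPosE : leviPos R h mu = [seq c <- PhiM | pos c].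
Proof. by rewrite -filter_predI; apply: eq_filter => c /=; rewrite andbC. Qed.

Lemma alcPt_off_leviWalls : off_walls PhiM y0.
Proof. exact: off_walls_sub leviRoots_sub (alcPt_off_walls h_reg). Qed.

Lemma lenM_nsep x : inW PhiM x.2 -> nsep PhiM y0 (act x y0) = (2 * lenM R h mu x)%N.
Proof.
move=> xW; rewrite /lenM leviPosE; apply: nsep_lenP => //.
- exact: levi_uniq_roots.
- exact: levi_opp.
- by move=> c /leviRoots_sub; exact: h_reg.
- exact: alcPt_off_leviWalls.
- exact: off_walls_act levi_refl_stable xW alcPt_off_leviWalls.
move=> c /leviRoots_sub cPhi pos_c.
by have [_ ->] := alcPt_floor h_reg cPhi; rewrite pos_c.
Qed.

Lemma lenM_lt_same_side z a m : inW PhiM z.2 -> a \in PhiM ->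
  (lenM R h mu z < lenM R h mu (acomp (- (m *: a.1), reflM a) z))%N ->
  same_side a m y0 (act z y0).
Proof.
move=> zW aM; rewrite -(ltn_pmul2l (isT : (0 < 2)%N)) -!lenM_nsep //; last exact: inWS.
have aPhi := leviRoots_sub aM.
rewrite act_comp act_affRefl; apply: same_side_of_nsep_lt => //.
- exact: levi_uniq_roots.
- exact: levi_refl_stable.
- exact: alcPt_off_walls.
exact: off_walls_act levi_refl_stable zW alcPt_off_leviWalls _ aM.
Qed.

Variable w : 'M[int]_n.
Hypothesis w_in : inWM R h mu w.

Lemma inWM_simple_pos a : a \in leviSimple R h mu -> 0 < pairZ (a.1 *m invmx w) h.
Proof.
have [wW w_min] := w_in; move=> a_simple.
have [aM pos_a] : a \in PhiM /\ pos a.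
  by move: a_simple; rewrite mem_filter leviPosE mem_filter => /andP [_ /andP [->]].
have aPhi := leviRoots_sub aM.
have [d dPhi [d2 d1]] := rd_transport wW aPhi.
apply: contraT; rewrite -d1 => neg_d.
set v := y0 *m toQM w.
have v_neg : pairQ v a.2 < 0.
  by rewrite pairQ_mulmx -d2; exact: alcPt_pair_lt0.
have sv : act (acomp (ofW (reflM a)) (ofW w)) y0 = refl_pt a 0 v.
  by rewrite act_comp !act_ofW /refl_pt scale0r subr0.
have a2 := rd_two aPhi.
have lt_sep : (nsep Phi y0 (refl_pt a 0 v) < nsep Phi y0 (refl_pt a 0 (refl_pt a 0 v)))%N.
  apply: nsep_refl_lt => //; [exact: rd_uniq_roots | exact: rd_refl_stable |
    exact: alcPt_off_walls | | ].
    rewrite -sv; apply: off_walls_act (aPhi);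
      [exact: rd_refl_stable | exact: (inWS aPhi wW) | exact: alcPt_off_walls].
  rewrite /same_side pairQ_refl_pt_self // !mulr0z !addr0; apply: mulr_gt0.
    exact: alcPt_pair_gt0.
  by rewrite oppr_gt0.
move: lt_sep; rewrite refl_pt_invol // -sv -[v]act_ofW !lenG_nsep //; last exact: inWS.
by have := w_min _ a_simple; lia.
Qed.

(* Delta_M is the set of positive roots of M that are not the sum of two
   positive roots of M, so we may induct on the height <a, h>. *)
Lemma inWM_pos a : a \in leviPos R h mu -> 0 < pairZ (a.1 *m invmx w) h.
Proof.
move: {2}`|pairZ a.1 h|%N (leqnn `|pairZ a.1 h|%N) => k.
elim: k a => [|k IH] a a_le a_pos;
  have pos_a : pos a by move: a_pos; rewrite mem_filter => /andP [/andP [_ ->]].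
  by move: a_le pos_a; lia.
have [|] := boolP (a \in leviSimple R h mu); first exact: inWM_simple_pos.
rewrite mem_filter a_pos andbT negbK => /hasP [q q_pos /hasP [q' q'_pos /eqP a_sum]].
have [pos_q pos_q'] : pos q /\ pos q'.
  move: q_pos q'_pos; rewrite !mem_filter.
  by move=> /andP [/andP [_ ->] _] /andP [/andP [_ ->] _].
have h_sum : pairZ a.1 h = pairZ q.1 h + pairZ q'.1 h by rewrite -a_sum pairZD.
rewrite -a_sum mulmxDl pairZD; apply: addr_gt0; [apply: IH q_pos | apply: IH q'_pos];
  move: a_le h_sum pos_q pos_q'; set ha := pairZ a.1 h; set hq := pairZ q.1 h;
  set hq' := pairZ q'.1 h; lia.
Qed.

Lemma inWM_pos_iff b : b \in PhiM -> (0 < pairZ (b.1 *m invmx w) h) = pos b.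
Proof.
move=> bM; have [pos_b|neg_b] := boolP (pos b).
  by apply: inWM_pos; rewrite leviPosE mem_filter pos_b.
have : oppRC b \in leviPos R h mu.
  rewrite leviPosE mem_filter levi_opp // andbT /= pairZN oppr_gt0.
  by rewrite lt_neqAle h_reg ?leviRoots_sub //= leNgt.
by move/inWM_pos; rewrite /= mulNmx pairZN oppr_gt0 => /lt_gtF.
Qed.

Lemma inWM_same_alcove : same_alcove PhiM y0 (y0 *m toQM w).
Proof.
have [wW _] := w_in; move=> b bM; have bPhi := leviRoots_sub bM.
have [d dPhi [d2 d1]] := rd_transport wW bPhi.
have [Zb flb] := alcPt_floor h_reg bPhi; have [Zd fld] := alcPt_floor h_reg dPhi.
by rewrite pairQ_mulmx -d2; split=> //; rewrite flb fld d1 inWM_pos_iff.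
Qed.

End Levi.

Theorem mainTheorem13 (n : nat) (R : rootDatum n) (h mu : 'rV[int]_n)
  (h_reg : forall p, p \in rd_roots R -> pairZ p.1 h != 0%R)
  (z r : affT n)
  (z_in : inW (leviRoots R mu) z.2)
  (r_refl : affRefl (leviRoots R mu) r)
  (hlt : (lenM R h mu z < lenM R h mu (acomp r z))%N)
  (w : 'M[int]_n) (w_in : inWM R h mu w) :
  (lenG R h (acomp (ainv (ofW w)) (acomp z (ofW w)))
     < lenG R h (acomp (ainv (ofW w)) (acomp (acomp r z) (ofW w))))%N.
Proof.
have [a aM [m r_def]] := r_refl; subst r.
have aPhi := leviRoots_sub aM.
have y0_w := inWM_same_alcove h_reg w_in.
have z_y0_w := same_alcove_act (@levi_refl_stable _ R mu) z_in y0_w.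
apply: (lenG_conj_lt h_reg _ aPhi);
  [by case: w_in | exact: inW_sub (@leviRoots_sub _ R mu) z_in |].
apply: same_side_alcove (aM) y0_w z_y0_w _.
exact: (lenM_lt_same_side h_reg z_in aM hlt).
Qed.
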